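(* Both $S_A$ and $S_B$ are nonempty.
   Context: All graphs are finite and simple. A graph $G$ is a minimal prime graph complement if $G$ has at least $2$ vertices and: (1) the complement $\overline{G}$ is connected; (2) $G$ is triangle-free; (3) $G$ is $3$-colorable; (4) for any two distinct nonadjacent vertices $u,v$ of $G$, adding the edge $uv$ to $G$ yields a graph that either contains a triangle or is not $3$-colorable. Standing setup: $\Gamma$ is a minimal prime graph complement with a vertex $X$ of degree $2$, whose two neighbors are $A$ and $B$. Among the vertices of $\Gamma$ other than $X,A,B$: $S_A$ is the set of those adjacent to $A$ but not $B$; $S_B$ the set of those adjacent to $B$ but not $A$; $S_Y$ the set of those adjacent to both $A$ and $B$; $S_Z$ the set of those adjacent to neither $A$ nor $B$. *)

From mathcomp Require Import all_boot.
Set Implicit Arguments. Unset Strict Implicit. Unset Printing Implicit Defensive.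

Definition simple_graph (T : finType) (e : rel T) : Prop :=
  symmetric e /\ irreflexive e.

Definition compl_rel (T : finType) (e : rel T) : rel T :=
  fun x y => (x != y) && ~~ e x y.

Definition graph_connected (T : finType) (e : rel T) : Prop :=
  forall x y : T, connect e x y.

Definition triangle_free (T : finType) (e : rel T) : Prop :=
  forall x y z : T, ~ [&& e x y, e y z & e z x].

Definition colorable (k : nat) (T : finType) (e : rel T) : Prop :=
  exists c : T -> 'I_k, forall x y : T, e x y -> c x != c y.

Definition add_edge (T : finType) (e : rel T) (u v : T) : rel T :=
  fun x y => [|| e x y, (x == u) && (y == v) | (x == v) && (y == u)].

Definition minimal_prime_graph_complement (T : finType) (e : rel T) : Prop :=
  [/\ 1 < #|T|,
      graph_connected (compl_rel e),
      triangle_free e,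
      colorable 3 e &
      forall u v : T, u != v -> ~~ e u v ->
        ~ triangle_free (add_edge e u v) \/ ~ colorable 3 (add_edge e u v)].

(* S_A : vertices other than X, A, B adjacent to A but not B. *)
Definition S_only (T : finType) (e : rel T) (X A B : T) : {set T} :=
  [set v | [&& v != X, v != A, v != B, e A v & ~~ e B v]].

(* If S_A were empty then N(A) would be contained in N(B).  Then A can be
   recoloured with the colour of B, so maximality forbids any non-edge Av with
   v adjacent to B; and a vertex v adjacent to neither A nor B could be joined
   to X, since X can be recoloured away from the single colour of A, B and the
   colour of v.  Hence every vertex other than A, B is adjacent to both, so
   {A, B} is a union of components of the complement, which contradicts its
   connectedness because X lies outside. *)
From mathcomp Require Import all_boot.

Set Implicit Arguments.
Unset Strict Implicit.
Unset Printing Implicit Defensive.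

Lemma ord3_avoid2 (a b : 'I_3) : exists k : 'I_3, (k != a) && (k != b).
Proof.
case: a => [[|[|[|a]]] ha] //; case: b => [[|[|[|b]]] hb] //;
  first [ by exists (@Ordinal 3 2 isT)
        | by exists (@Ordinal 3 1 isT)
        | by exists (@Ordinal 3 0 isT) ].
Qed.

Section Colorings.

Variables (T : finType) (e : rel T).

Definition proper_coloring (k : nat) (c : T -> 'I_k) : Prop :=
  forall x y, e x y -> c x != c y.

Lemma add_edge_colorable (c : T -> 'I_3) (u v : T) :
  proper_coloring c -> c u != c v -> colorable 3 (add_edge e u v).
Proof.
move=> c_ok cuv; exists c => x y.
case/or3P=> [/c_ok //|/andP[/eqP -> /eqP ->] //|/andP[/eqP -> /eqP ->]].
by rewrite eq_sym.
Qed.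

Hypotheses (e_sym : symmetric e) (e_irr : irreflexive e).

Lemma proper_recolor k (c : T -> 'I_k) (u : T) (i : 'I_k) :
  proper_coloring c -> (forall w, e u w -> i != c w) ->
  proper_coloring (fun x => if x == u then i else c x).
Proof.
move=> c_ok i_ok x y.
have [->|xu] := eqVneq x u; have [->|yu] := eqVneq y u.
- by rewrite e_irr.
- exact: i_ok.
- by rewrite e_sym eq_sym => /i_ok.
- exact: c_ok.
Qed.

Lemma add_edge_triangle_free (u v : T) :
  u != v -> triangle_free e -> (forall w, e u w -> ~~ e v w) ->
  triangle_free (add_edge e u v).
Proof.
move=> uv tf no_common x y z /and3P[].
have no_common' w : e u w -> e v w -> False by move/no_common/negP.
have e_sym' a b : e a b -> e b a by rewrite e_sym.
case/or3P=> [exy|/andP[/eqP ? /eqP ?]|/andP[/eqP ? /eqP ?]];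
case/or3P=> [eyz|/andP[/eqP ? /eqP ?]|/andP[/eqP ? /eqP ?]];
case/or3P=> [ezx|/andP[/eqP ? /eqP ?]|/andP[/eqP ? /eqP ?]]; subst;
  rewrite ?eqxx in uv => //;
  try (by apply: (tf x y z); rewrite exy eyz ezx);
  try (by rewrite e_irr in exy); try (by rewrite e_irr in eyz);
  try (by rewrite e_irr in ezx); eauto.
Qed.

End Colorings.

Section MinimalPrimeGraphComplement.

Variables (T : finType) (e : rel T).
Hypotheses (e_sym : symmetric e) (e_irr : irreflexive e)
  (e_min : minimal_prime_graph_complement e).

Lemma compl_rel_sym : symmetric (compl_rel e).
Proof. by move=> x y; rewrite /compl_rel eq_sym e_sym. Qed.

Lemma nonedge_same_color (c : T -> 'I_3) (u v : T) :
  proper_coloring e c -> u != v -> ~~ e u v ->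
  (forall w, e u w -> ~~ e v w) -> c u = c v.
Proof.
case: e_min => _ _ tf _ maximal c_ok uv nuv no_common.
apply/eqP/negPn/negP => cuv.
case: (maximal u v uv nuv); apply.
- exact: add_edge_triangle_free.
- exact: add_edge_colorable c_ok cuv.
Qed.

Variables (X A B : T) (c : T -> 'I_3).
Hypotheses (e_X : forall y, e X y = (y == A) || (y == B))
  (c_ok : proper_coloring e c) (SA_empty : S_only e X A B = set0).

Let eXA : e X A. Proof. by rewrite e_X eqxx. Qed.
Let eXB : e X B. Proof. by rewrite e_X eqxx orbT. Qed.

Lemma adj_A_adj_B (w : T) : e A w -> e B w.
Proof.
move=> eAw; have [->|wX] := eqVneq w X; first by rewrite e_sym.
have [wB|wB] := eqVneq w B.
  move: eAw; rewrite wB => eAB.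
  by case: e_min => _ _ tf _ _; case: (tf X A B); rewrite eXA eAB e_sym eXB.
have wA : w != A by apply: contraTneq eAw => ->; rewrite e_irr.
apply/negPn/negP => nBw.
have : w \in S_only e X A B by rewrite inE wX wA wB eAw nBw.
by rewrite SA_empty inE.
Qed.

Let cA (x : T) : 'I_3 := if x == A then c B else c x.

Let cA_ok : proper_coloring e cA.
Proof.
by apply: proper_recolor => // w /adj_A_adj_B /c_ok; rewrite eq_sym.
Qed.

Lemma adj_B_adj_A (v : T) : v != A -> e B v -> e A v.
Proof.
move=> vA eBv; apply/negPn/negP => nAv.
suff : cA A = cA v by rewrite /cA eqxx (negbTE vA); apply/eqP/c_ok.
apply: nonedge_same_color cA_ok _ nAv _; first by rewrite eq_sym.
move=> w eAw; apply/negP => evw.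
by case: e_min => _ _ tf _ _; case: (tf B v w); rewrite eBv evw e_sym adj_A_adj_B.
Qed.

Lemma adj_A (v : T) : v != A -> v != B -> e A v.
Proof.
move=> vA vB; apply/negPn/negP => nAv.
have nBv : ~~ e B v by apply: contra nAv; apply: adj_B_adj_A.
have nXv : ~~ e X v by rewrite e_X (negbTE vA) (negbTE vB).
have Xv : X != v by apply: contraNneq nAv => <-; rewrite e_sym eXA.
have [k /andP[kB kv]] := ord3_avoid2 (c B) (cA v).
pose d x := if x == X then k else cA x.
have d_ok : proper_coloring e d.
  apply: proper_recolor cA_ok _ => // w; rewrite e_X.
  by case/orP=> /eqP->; rewrite /cA ?eqxx ?if_same.
suff : d X = d v by rewrite /d eqxx eq_sym (negbTE Xv); apply/eqP.
apply: nonedge_same_color d_ok Xv nXv _ => w; rewrite e_X e_sym.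
by case/orP=> /eqP->.
Qed.

Lemma S_only_empty_false : False.
Proof.
case: e_min => _ conn _ _ _.
pose AB_set := [pred x | (x == A) || (x == B)].
have AB_closed : closed (compl_rel e) AB_set.
  apply: intro_closed; first exact: sym_connect_sym compl_rel_sym.
  move=> x y /andP[_ nxy]; rewrite !inE => /orP[] /eqP x_AB;
  apply/negPn/negP => /norP[yA yB]; case/negP: nxy; rewrite x_AB;
  [exact: adj_A | exact/adj_A_adj_B/adj_A].
have := closed_connect AB_closed (conn A X).
by rewrite !inE eqxx /= => /esym/orP[] /eqP XAB; [move: eXA | move: eXB];
  rewrite -XAB e_irr.
Qed.

End MinimalPrimeGraphComplement.

Lemma S_only_neq0 (T : finType) (e : rel T) (X A B : T) :
  simple_graph e -> minimal_prime_graph_complement e ->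
  (forall y, e X y = (y == A) || (y == B)) -> S_only e X A B != set0.
Proof.
move=> [e_sym e_irr] e_min e_X; apply/eqP => SA_empty.
have [_ _ _ [c c_ok] _] := e_min.
exact: (S_only_empty_false e_sym e_irr e_min e_X c_ok SA_empty).
Qed.

Theorem lemma12 (T : finType) (e : rel T) (X A B : T) :
  simple_graph e ->
  minimal_prime_graph_complement e ->
  A != B ->
  (forall y : T, e X y = (y == A) || (y == B)) ->
  S_only e X A B != set0 /\ S_only e X B A != set0.
Proof.
move=> e_simple e_min _ e_X; split; first exact: S_only_neq0.
by apply: S_only_neq0 => // y; rewrite orbC.
Qed.
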